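(* Let $c_0=(x_0,y_0,z_0)=(-0.2794,\,0.2451,\,0.36)\in\mathbb R^3$ and let $L=B(c_0,1)\cap B(-c_0,1)\subseteq\mathbb R^3$. Then $S_{e_3}(L)\notin\mathcal S_3$. More precisely, let $w=(0.4154,\,0.7262)$ and define, near $w$, \[ f_d(x,y)=-z_0+\sqrt{1-(x-x_0)^2-(y-y_0)^2},\qquad g_u(x,y)=-z_0+\sqrt{1-(x+x_0)^2-(y+y_0)^2}, \] and $h=(f_d+g_u)/2$. Then $w\in P_{e_3}(L)$, $L\cap((w,0)+\mathbb Re_3)=\{(w,z): -f_d(w)\le z\le g_u(w)\}$, the boundary of $S_{e_3}(L)$ near the points $(w,\pm h(w))$ is given by the graphs of $\pm h$, and the sectional curvature of this boundary at $(w,h(w))$ (and at $(w,-h(w))$) in direction $e_1$, \[ \kappa_h(w,e_1)=\frac{|(\nabla^2h(w))_{1,1}|}{\sqrt{1+\|\nabla h(w)\|^2}\,\bigl(1+\langle e_1,\nabla h(w)\rangle^2\bigr)}, \] is strictly smaller than $1$.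
   Context: For $c\in\mathbb R^3$, $B(c,1)$ is the closed Euclidean unit ball centered at $c$. $\mathcal S_3$ is the class of all intersections of families of closed Euclidean unit balls in $\mathbb R^3$; a set in $\mathcal S_3$ with smooth boundary has all sectional curvatures at least $1$ at every boundary point. $P_{e_3}$ is orthogonal projection onto $e_3^\perp\cong\mathbb R^2$. For a compact convex set $K$ and $u\in S^{2}$, for each $x\in P_{u^\perp}(K)$ write $K\cap(x+\mathbb Ru)=[x+a(x)u,x+b(x)u]$; the Steiner symmetral is $S_u(K)=\{x+yu: x\in P_{u^\perp}(K),\ |y|\le |b(x)-a(x)|/2\}$. *)

From Stdlib Require Import Reals.
From Coquelicot Require Import Coquelicot.
Open Scope R_scope.

Definition pt3 := (R * R * R)%type.

Definition unit_ball (c : pt3) (p : pt3) : Prop :=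
  let '(c1, c2, c3) := c in let '(p1, p2, p3) := p in
  (p1 - c1)^2 + (p2 - c2)^2 + (p3 - c3)^2 <= 1.

Definition in_S3 (K : pt3 -> Prop) : Prop :=
  exists C : pt3 -> Prop, forall p, K p <-> (forall c, C c -> unit_ball c p).

Definition proj_e3 (K : pt3 -> Prop) (x y : R) : Prop := exists z, K (x, y, z).

(* Steiner symmetral in direction e3: over (x,y) in P(K), the fiber
   K ∩ ((x,y,0)+R e3) = [(x,y,a),(x,y,b)] and the symmetral keeps |t| <= (b-a)/2. *)
Definition steiner_e3 (K : pt3 -> Prop) (p : pt3) : Prop :=
  let '(x, y, t) := p in
  exists a b, K (x, y, a) /\ K (x, y, b) /\
    (forall z, K (x, y, z) -> a <= z <= b) /\ Rabs t <= Rabs (b - a) / 2.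

Definition x0 : R := -2794 / 10000.
Definition y0 : R := 2451 / 10000.
Definition z0 : R := 36 / 100.
Definition c0 : pt3 := (x0, y0, z0).
Definition mc0 : pt3 := (- x0, - y0, - z0).

Definition L (p : pt3) : Prop := unit_ball c0 p /\ unit_ball mc0 p.

Definition wx : R := 4154 / 10000.
Definition wy : R := 7262 / 10000.

Definition f_d (x y : R) : R := - z0 + sqrt (1 - (x - x0)^2 - (y - y0)^2).
Definition g_u (x y : R) : R := - z0 + sqrt (1 - (x + x0)^2 - (y + y0)^2).
Definition h (x y : R) : R := (f_d x y + g_u x y) / 2.

Definition h_1 : R := Derive (fun s => h s wy) wx.
Definition h_2 : R := Derive (fun s => h wx s) wy.
Definition h_11 : R := Derive (fun s => Derive (fun t => h t wy) s) wx.

Definition kappa_h_w_e1 : R :=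
  Rabs h_11 / (sqrt (1 + (h_1^2 + h_2^2)) * (1 + h_1^2)).

From Stdlib Require Import Reals Lra Psatz.
From Coquelicot Require Import Coquelicot.
Open Scope R_scope.

(* Every set in S_3 is spindle convex: if each unit ball containing p and q also
   contains r, then r belongs to every intersection of unit balls containing p and q.
   Near w the symmetral S_e3(L) is {|z| <= h}, and since kappa_h(w,e1) < 1 its upper
   boundary bends less than a unit sphere in direction e1.  So two points p, q just
   below the graph of h, on either side of w in direction e1, span a spindle that
   reaches above the graph at a point r; this r witnesses that S_e3(L) is not
   spindle convex. *)

Lemma le_sqrt_of_sq_le a X : 0 <= a -> a * a <= X -> a <= sqrt X.
Proof. intros Ha H. rewrite <- (sqrt_square a Ha). now apply sqrt_le_1_alt. Qed.

Lemma sqrt_le_of_le_sq a X : 0 <= a -> X <= a * a -> sqrt X <= a.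
Proof. intros Ha H. rewrite <- (sqrt_square a Ha). now apply sqrt_le_1_alt. Qed.

Definition dist2 (p q : pt3) : R :=
  let '(p1, p2, p3) := p in let '(q1, q2, q3) := q in
  (p1 - q1)^2 + (p2 - q2)^2 + (p3 - q3)^2.

Definition midpoint (p q : pt3) : pt3 :=
  let '(p1, p2, p3) := p in let '(q1, q2, q3) := q in
  ((p1 + q1) / 2, (p2 + q2) / 2, (p3 + q3) / 2).

(* With m the midpoint of p q: |c - m|^2 <= 1 - |p - q|^2/4 by the parallelogram law,
   and 2 <c - m, m - r> <= k |c - m|^2 + |r - m|^2 / k. *)
Lemma unit_ball_spindle (c p q r : pt3) (k : R) : 0 < k ->
  (1 + k) * (1 - dist2 p q / 4) + (1 + / k) * dist2 r (midpoint p q) <= 1 ->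
  unit_ball c p -> unit_ball c q -> unit_ball c r.
Proof.
destruct c as [[c1 c2] c3], p as [[p1 p2] p3], q as [[q1 q2] q3], r as [[r1 r2] r3].
unfold unit_ball, dist2, midpoint. intros Hk Hkr Hp Hq.
set (m1 := (p1 + q1) / 2) in *. set (m2 := (p2 + q2) / 2) in *. set (m3 := (p3 + q3) / 2) in *.
assert (Hmid : (c1 - m1)^2 + (c2 - m2)^2 + (c3 - m3)^2
               <= 1 - ((p1 - q1)^2 + (p2 - q2)^2 + (p3 - q3)^2) / 4)
  by (unfold m1, m2, m3; lra).
assert (Hcs : (c1 - r1)^2 + (c2 - r2)^2 + (c3 - r3)^2 <=
   (1 + k) * ((c1 - m1)^2 + (c2 - m2)^2 + (c3 - m3)^2)
   + (1 + / k) * ((r1 - m1)^2 + (r2 - m2)^2 + (r3 - m3)^2)).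
{ assert (Hsq : 0 <= / k * ((k * (c1 - m1) + (r1 - m1))^2 + (k * (c2 - m2) + (r2 - m2))^2
                            + (k * (c3 - m3) + (r3 - m3))^2)).
  { apply Rmult_le_pos; [apply Rlt_le, Rinv_0_lt_compat; lra|].
    pose proof (pow2_ge_0 (k * (c1 - m1) + (r1 - m1))).
    pose proof (pow2_ge_0 (k * (c2 - m2) + (r2 - m2))).
    pose proof (pow2_ge_0 (k * (c3 - m3) + (r3 - m3))). lra. }
  assert (Hkk : / k * k = 1) by (field; lra).
  replace (/ k * _) with
    (k * ((c1 - m1)^2 + (c2 - m2)^2 + (c3 - m3)^2)
     + 2 * ((c1 - m1) * (r1 - m1) + (c2 - m2) * (r2 - m2) + (c3 - m3) * (r3 - m3))
     + / k * ((r1 - m1)^2 + (r2 - m2)^2 + (r3 - m3)^2)) in Hsq by (field; lra).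
  lra. }
nra.
Qed.

Lemma in_S3_spindle (K : pt3 -> Prop) (p q r : pt3) : in_S3 K -> K p -> K q ->
  (forall c, unit_ball c p -> unit_ball c q -> unit_ball c r) -> K r.
Proof.
intros [C HC] Hp Hq Hr. apply HC. intros c Cc.
apply Hr; [apply HC with (p := p) | apply HC with (p := q)]; assumption.
Qed.

Lemma steiner_e3_interval_fiber (K : pt3 -> Prop) (x y lo hi : R) :
  (forall z, K (x, y, z) <-> lo <= z <= hi) ->
  forall t, steiner_e3 K (x, y, t) <-> Rabs t <= (hi - lo) / 2.
Proof.
intros HK t. unfold steiner_e3. split.
- intros (a & b & Ka & Kb & _ & Ht). apply HK in Ka. apply HK in Kb.
  assert (Rabs (b - a) <= hi - lo) by (apply Rabs_le; lra). lra.
- intros Ht. pose proof (Rabs_pos t).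
  exists lo, hi. split; [apply HK; lra|]. split; [apply HK; lra|]. split.
  + intros z. apply HK.
  + rewrite (Rabs_pos_eq (hi - lo)) by lra. lra.
Qed.

Lemma lens_fiber (a b c x y : R) :
  0 <= 1 - (x - a)^2 - (y - b)^2 -> 0 <= 1 - (x + a)^2 - (y + b)^2 ->
  Rabs (sqrt (1 - (x - a)^2 - (y - b)^2) - sqrt (1 - (x + a)^2 - (y + b)^2)) <= 2 * c ->
  forall z, unit_ball (a, b, c) (x, y, z) /\ unit_ball (- a, - b, - c) (x, y, z) <->
    c - sqrt (1 - (x - a)^2 - (y - b)^2) <= z <= - c + sqrt (1 - (x + a)^2 - (y + b)^2).
Proof.
intros HA HB Hc z. unfold unit_ball.
pose proof (sqrt_pos (1 - (x - a)^2 - (y - b)^2)) as Pa.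
pose proof (sqrt_sqrt _ HA) as Ea. pose proof (sqrt_pos (1 - (x + a)^2 - (y + b)^2)) as Pb.
pose proof (sqrt_sqrt _ HB) as Eb. apply Rabs_le_between in Hc.
set (sa := sqrt _) in *. set (sb := sqrt _) in *.
split; intros [P Q]; split; nra.
Qed.

(* On this disc the two radicands are at most 0.36 and 0.25, so the caps differ by
   less than 2 z0 and the fiber of the lens is the interval between them. *)
Lemma L_fiber_near_w (x y : R) : (x - wx)^2 + (y - wy)^2 < (1/100)^2 ->
  forall z, L (x, y, z) <-> - f_d x y <= z <= g_u x y.
Proof.
intros Hxy.
pose proof (pow2_ge_0 (x - wx)). pose proof (pow2_ge_0 (y - wy)).
assert (Hx : -1/100 < x - wx < 1/100) by (split; nra).
assert (Hy : -1/100 < y - wy < 1/100) by (split; nra).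
unfold wx, wy in Hx, Hy.
assert (A0 : 0 <= 1 - (x - x0)^2 - (y - y0)^2) by (unfold x0, y0; nra).
assert (A1 : 1 - (x - x0)^2 - (y - y0)^2 <= 6/10 * (6/10)) by (unfold x0, y0; nra).
assert (B0 : 0 <= 1 - (x + x0)^2 - (y + y0)^2) by (unfold x0, y0; nra).
assert (B1 : 1 - (x + x0)^2 - (y + y0)^2 <= 5/10 * (5/10)) by (unfold x0, y0; nra).
intros z. unfold L, c0, mc0, f_d, g_u.
rewrite (lens_fiber x0 y0 z0 x y A0 B0).
- split; intros; lra.
- apply sqrt_le_of_le_sq in A1; [|lra]. apply sqrt_le_of_le_sq in B1; [|lra].
  pose proof (sqrt_pos (1 - (x - x0)^2 - (y - y0)^2)).
  pose proof (sqrt_pos (1 - (x + x0)^2 - (y + y0)^2)).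
  apply Rabs_le. unfold z0. lra.
Qed.

Lemma steiner_L_near_w (x y z : R) : (x - wx)^2 + (y - wy)^2 < (1/100)^2 ->
  steiner_e3 L (x, y, z) <-> Rabs z <= h x y.
Proof.
intros Hxy. rewrite (steiner_e3_interval_fiber L x y _ _ (L_fiber_near_w x y Hxy)).
unfold h. replace (g_u x y - - f_d x y) with (f_d x y + g_u x y) by ring. reflexivity.
Qed.

Lemma L_fiber_ordered_at_w : - f_d wx wy <= g_u wx wy.
Proof.
unfold f_d, g_u.
assert (53459/100000 <= sqrt (1 - (wx - x0)^2 - (wy - y0)^2))
  by (apply le_sqrt_of_sq_le; unfold wx, wy, x0, y0; lra).
assert (19514/100000 <= sqrt (1 - (wx + x0)^2 - (wy + y0)^2))
  by (apply le_sqrt_of_sq_le; unfold wx, wy, x0, y0; lra).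
unfold z0. lra.
Qed.

(* p_in and q_in lie just below the graph of h at x = wx + 0.0042 and x = wx - 0.0043
   (y ~ wy), r_out just above it at x ~ wx; the weight k used for r_out_in_spindle was
   found numerically. *)
Definition p_in : pt3 := (1049102191/2500000000, 7261841731/10000000000, 6258141/10000000000).
Definition q_in : pt3 := (4111483597/10000000000, 7261841417/10000000000, 4551927/500000000).
Definition r_out : pt3 := (1038500281/2500000000, 726200331/1000000000, 24351689/5000000000).

Lemma steiner_L_p_in : steiner_e3 L p_in.
Proof.
unfold p_in. rewrite steiner_L_near_w by (unfold wx, wy; lra).
rewrite Rabs_pos_eq by lra. unfold h, f_d, g_u.
assert (529055641/1000000000 <= sqrt (1 - (1049102191/2500000000 - x0)^2 - (7261841731/10000000000 - y0)^2))
  by (apply le_sqrt_of_sq_le; [lra|]; unfold x0, y0; lra).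
assert (24024581/125000000 <= sqrt (1 - (1049102191/2500000000 + x0)^2 - (7261841731/10000000000 + y0)^2))
  by (apply le_sqrt_of_sq_le; [lra|]; unfold x0, y0; lra).
unfold z0; lra.
Qed.

Lemma steiner_L_q_in : steiner_e3 L q_in.
Proof.
unfold q_in. rewrite steiner_L_near_w by (unfold wx, wy; lra).
rewrite Rabs_pos_eq by lra. unfold h, f_d, g_u.
assert (540093521/1000000000 <= sqrt (1 - (4111483597/10000000000 - x0)^2 - (7261841417/10000000000 - y0)^2))
  by (apply le_sqrt_of_sq_le; [lra|]; unfold x0, y0; lra).
assert (198114829/1000000000 <= sqrt (1 - (4111483597/10000000000 + x0)^2 - (7261841417/10000000000 + y0)^2))
  by (apply le_sqrt_of_sq_le; [lra|]; unfold x0, y0; lra).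
unfold z0; lra.
Qed.

Lemma not_steiner_L_r_out : ~ steiner_e3 L r_out.
Proof.
unfold r_out. rewrite steiner_L_near_w by (unfold wx, wy; lra).
rewrite Rabs_pos_eq by lra. unfold h, f_d, g_u.
assert (sqrt (1 - (1038500281/2500000000 - x0)^2 - (726200331/1000000000 - y0)^2) <= 267299119/500000000)
  by (apply sqrt_le_of_le_sq; [lra|]; unfold x0, y0; lra).
assert (sqrt (1 - (1038500281/2500000000 + x0)^2 - (726200331/1000000000 + y0)^2) <= 48785011/250000000)
  by (apply sqrt_le_of_le_sq; [lra|]; unfold x0, y0; lra).
unfold z0; lra.
Qed.

Lemma r_out_in_spindle (c : pt3) : unit_ball c p_in -> unit_ball c q_in -> unit_ball c r_out.
Proof.
apply (unit_ball_spindle c p_in q_in r_out (8973239071/500000000000000)); [lra|].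
unfold dist2, midpoint, p_in, q_in, r_out. lra.
Qed.

Lemma steiner_L_not_S3 : ~ in_S3 (steiner_e3 L).
Proof.
intros HS. apply not_steiner_L_r_out.
exact (in_S3_spindle _ _ _ _ HS steiner_L_p_in steiner_L_q_in r_out_in_spindle).
Qed.

Definition cap (r a t : R) : R := sqrt (r - (t - a)^2).
Definition cap_slope (r a t : R) : R := - (t - a) / cap r a t.

Lemma is_derive_cap (r a t : R) : 0 < r - (t - a)^2 ->
  is_derive (cap r a) t (cap_slope r a t).
Proof.
intros H. unfold cap_slope, cap. auto_derive; [lra|].
assert (sqrt (r - (t - a)^2) <> 0) by (apply Rgt_not_eq, sqrt_lt_R0; lra).
replace (r + - ((t + - a) * ((t + - a) * 1))) with (r - (t - a)^2) by ring.
field; auto.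
Qed.

Lemma is_derive_cap_slope (r a t : R) : 0 < r - (t - a)^2 ->
  is_derive (cap_slope r a) t (- r / cap r a t ^ 3).
Proof.
intros H. unfold cap_slope, cap.
assert (Hs : sqrt (r - (t - a)^2) <> 0) by (apply Rgt_not_eq, sqrt_lt_R0; lra).
pose proof (sqrt_sqrt (r - (t - a)^2) (Rlt_le _ _ H)) as Hsq.
auto_derive;
  replace (r + - ((t + - a) * ((t + - a) * 1))) with (r - (t - a)^2) by ring.
- split; [lra|auto].
- replace (- r) with (- (sqrt (r - (t - a)^2) * sqrt (r - (t - a)^2) + (t - a)^2))
    by (rewrite Hsq; ring).
  field; auto.
Qed.

Lemma is_derive_half_sum (f g : R -> R) (c x df dg : R) :
  is_derive f x df -> is_derive g x dg ->
  is_derive (fun s => (f s + g s) / 2 - c) x ((df + dg) / 2).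
Proof.
intros Hf Hg.
evar (d : R). replace ((df + dg) / 2) with d; unfold d.
- apply @is_derive_minus; [|apply is_derive_const].
  apply @is_derive_scal_l. apply @is_derive_plus; eassumption.
- unfold minus, plus, opp, zero, scal; simpl; unfold mult; simpl. lra.
Qed.

Lemma h_slice_e1 (t : R) :
  h t wy = (cap (1 - (wy - y0)^2) x0 t + cap (1 - (wy + y0)^2) (- x0) t) / 2 - z0.
Proof.
unfold h, f_d, g_u, cap.
replace (1 - (wy - y0)^2 - (t - x0)^2) with (1 - (t - x0)^2 - (wy - y0)^2) by ring.
replace (1 - (wy + y0)^2 - (t - - x0)^2) with (1 - (t + x0)^2 - (wy + y0)^2) by ring.
lra.
Qed.

Lemma h_slice_e2 (s : R) :
  h wx s = (cap (1 - (wx - x0)^2) y0 s + cap (1 - (wx + x0)^2) (- y0) s) / 2 - z0.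
Proof.
unfold h, f_d, g_u, cap.
replace (1 - (wx + x0)^2 - (s - - y0)^2) with (1 - (wx + x0)^2 - (s + y0)^2) by ring.
lra.
Qed.

Lemma cap_domain_near_wx (s : R) : Rabs (s - wx) < 1/100 ->
  0 < 1 - (wy - y0)^2 - (s - x0)^2 /\ 0 < 1 - (wy + y0)^2 - (s - - x0)^2.
Proof. intros H. apply Rabs_def2 in H. unfold wx, wy, x0, y0 in *. split; nra. Qed.

Lemma is_derive_h_e1 (s : R) : Rabs (s - wx) < 1/100 ->
  is_derive (fun t => h t wy) s
    ((cap_slope (1 - (wy - y0)^2) x0 s + cap_slope (1 - (wy + y0)^2) (- x0) s) / 2).
Proof.
intros Hs. destruct (cap_domain_near_wx s Hs) as [HA HB].
apply (is_derive_ext (fun t => (cap (1 - (wy - y0)^2) x0 t + cap (1 - (wy + y0)^2) (- x0) t) / 2 - z0)).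
- intros t. symmetry. apply h_slice_e1.
- apply is_derive_half_sum; now apply is_derive_cap.
Qed.

Lemma h_1_eq :
  h_1 = (cap_slope (1 - (wy - y0)^2) x0 wx + cap_slope (1 - (wy + y0)^2) (- x0) wx) / 2.
Proof.
apply is_derive_unique, is_derive_h_e1. rewrite Rminus_diag, Rabs_R0. lra.
Qed.

Lemma h_11_eq : h_11 =
  (- (1 - (wy - y0)^2) / cap (1 - (wy - y0)^2) x0 wx ^ 3
   + - (1 - (wy + y0)^2) / cap (1 - (wy + y0)^2) (- x0) wx ^ 3) / 2.
Proof.
apply is_derive_unique.
apply (is_derive_ext_loc
  (fun s => (cap_slope (1 - (wy - y0)^2) x0 s + cap_slope (1 - (wy + y0)^2) (- x0) s) / 2 - 0)).
- assert (P : 0 < 1/100) by lra. exists (mkposreal _ P). intros s Hs.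
  rewrite Rminus_0_r. symmetry. apply is_derive_unique, is_derive_h_e1, Hs.
- assert (Hw : Rabs (wx - wx) < 1/100) by (rewrite Rminus_diag, Rabs_R0; lra).
  destruct (cap_domain_near_wx wx Hw) as [HA HB].
  apply is_derive_half_sum; now apply is_derive_cap_slope.
Qed.

Lemma h_2_eq :
  h_2 = (cap_slope (1 - (wx - x0)^2) y0 wy + cap_slope (1 - (wx + x0)^2) (- y0) wy) / 2.
Proof.
apply is_derive_unique.
apply (is_derive_ext (fun s => (cap (1 - (wx - x0)^2) y0 s + cap (1 - (wx + x0)^2) (- y0) s) / 2 - z0)).
- intros s. symmetry. apply h_slice_e2.
- apply is_derive_half_sum; apply is_derive_cap; unfold wx, wy, x0, y0; lra.
Qed.

Lemma cap_slope_le (r a t u : R) : 0 <= t - a -> 0 < cap r a t <= u ->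
  cap_slope r a t <= - (t - a) / u.
Proof.
intros Ht Hc. unfold cap_slope, Rdiv. rewrite !Ropp_mult_distr_l_reverse.
apply Ropp_le_contravar, Rmult_le_compat_l; [lra|]. apply Rinv_le_contravar; lra.
Qed.

Lemma div_cube_bounds (r l c : R) : 0 <= r -> 0 < l <= c -> 0 <= r / c ^ 3 <= r / l ^ 3.
Proof.
intros Hr Hl. assert (Hl3 : 0 < l ^ 3) by (apply pow_lt; lra).
assert (Hlc : l ^ 3 <= c ^ 3) by (apply pow_incr; lra).
split; unfold Rdiv.
- apply Rmult_le_pos; [lra|]. apply Rlt_le, Rinv_0_lt_compat; lra.
- apply Rmult_le_compat_l; [lra|]. apply Rinv_le_contravar; lra.
Qed.

Lemma cap_bounds_at_w :
  53459/100000 <= cap (1 - (wy - y0)^2) x0 wx <= 53460/100000 /\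
  19514/100000 <= cap (1 - (wy + y0)^2) (- x0) wx <= 19515/100000 /\
  cap (1 - (wx - x0)^2) y0 wy <= 53460/100000 /\
  cap (1 - (wx + x0)^2) (- y0) wy <= 19515/100000.
Proof.
unfold cap, wx, wy, x0, y0.
repeat split; first [apply le_sqrt_of_sq_le | apply sqrt_le_of_le_sq]; lra.
Qed.

Lemma h_1_le : h_1 <= - 998/1000.
Proof.
rewrite h_1_eq. destruct cap_bounds_at_w as (A & B & _).
assert (HA : cap_slope (1 - (wy - y0)^2) x0 wx <= - (wx - x0) / (53460/100000))
  by (apply cap_slope_le; [unfold wx, x0; lra | split; lra]).
assert (HB : cap_slope (1 - (wy + y0)^2) (- x0) wx <= - (wx - - x0) / (19515/100000))
  by (apply cap_slope_le; [unfold wx, x0; lra | split; lra]).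
unfold wx, x0 in *. lra.
Qed.

Lemma h_2_le : h_2 <= - 2938/1000.
Proof.
rewrite h_2_eq. destruct cap_bounds_at_w as (_ & _ & A & B).
assert (A0 : 0 < cap (1 - (wx - x0)^2) y0 wy)
  by (apply sqrt_lt_R0; unfold wx, wy, x0, y0; lra).
assert (B0 : 0 < cap (1 - (wx + x0)^2) (- y0) wy)
  by (apply sqrt_lt_R0; unfold wx, wy, x0, y0; lra).
assert (HA : cap_slope (1 - (wx - x0)^2) y0 wy <= - (wy - y0) / (53460/100000))
  by (apply cap_slope_le; [unfold wy, y0; lra | split; lra]).
assert (HB : cap_slope (1 - (wx + x0)^2) (- y0) wy <= - (wy - - y0) / (19515/100000))
  by (apply cap_slope_le; [unfold wy, y0; lra | split; lra]).
unfold wy, y0 in *. lra.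
Qed.

Lemma abs_h_11_le : Rabs h_11 <= 6323/1000.
Proof.
rewrite h_11_eq. destruct cap_bounds_at_w as (A & B & _).
set (cA := cap (1 - (wy - y0)^2) x0 wx) in *.
set (cB := cap (1 - (wy + y0)^2) (- x0) wx) in *.
assert (HA : 0 <= (1 - (wy - y0)^2) / cA ^ 3 <= (1 - (wy - y0)^2) / (53459/100000) ^ 3)
  by (apply div_cube_bounds; [unfold wy, y0; lra | split; lra]).
assert (HB : 0 <= (1 - (wy + y0)^2) / cB ^ 3 <= (1 - (wy + y0)^2) / (19514/100000) ^ 3)
  by (apply div_cube_bounds; [unfold wy, y0; lra | split; lra]).
unfold Rdiv in *. rewrite !Ropp_mult_distr_l_reverse.
rewrite Rabs_left1 by lra. unfold wy, y0 in *. lra.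
Qed.

Lemma curvature_lt_1 (a1 a2 a11 : R) :
  a1 <= - 998/1000 -> a2 <= - 2938/1000 -> Rabs a11 <= 6323/1000 ->
  Rabs a11 / (sqrt (1 + (a1^2 + a2^2)) * (1 + a1^2)) < 1.
Proof.
intros H1 H2 H11.
assert (S : 325/100 <= sqrt (1 + (a1^2 + a2^2))) by (apply le_sqrt_of_sq_le; nra).
assert (Q : 1996/1000 <= 1 + a1^2) by nra.
apply Rlt_div_l; nra.
Qed.

Lemma kappa_h_w_e1_lt_1 : kappa_h_w_e1 < 1.
Proof. exact (curvature_lt_1 _ _ _ h_1_le h_2_le abs_h_11_le). Qed.

Theorem theorem4p4 :
  ~ in_S3 (steiner_e3 L) /\
  proj_e3 L wx wy /\
  (forall z, L (wx, wy, z) <-> - f_d wx wy <= z <= g_u wx wy) /\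
  (exists delta, 0 < delta /\
     forall x y z, (x - wx)^2 + (y - wy)^2 < delta^2 ->
       (steiner_e3 L (x, y, z) <-> Rabs z <= h x y)) /\
  kappa_h_w_e1 < 1.
Proof.
assert (Hw : (wx - wx)^2 + (wy - wy)^2 < (1/100)^2) by lra.
split; [exact steiner_L_not_S3|]. split; [|split; [|split]].
- exists (- f_d wx wy). apply (L_fiber_near_w _ _ Hw).
  pose proof L_fiber_ordered_at_w. lra.
- exact (L_fiber_near_w _ _ Hw).
- exists (1/100). split; [lra|]. intros x y z Hxy. exact (steiner_L_near_w x y z Hxy).
- exact kappa_h_w_e1_lt_1.
Qed.
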